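(* Let $d\ge 1$, $k\ge1$ and let $(\vec n)$ be a $d\times k$ matrix of nonnegative integers. If $k\le d$, then for all $0<\epsilon<L$ the modified analytic weight $\widetilde W^{k,(\vec n)}_{\epsilon<L}$ is identically zero as a distribution on $(\mathbb{C}^d)^k$; indeed the form $\left(\frac{\partial}{\partial z^k}\right)^{\vec n^k}K^{an}_\epsilon(z^1,z^k)\prod_{\alpha=1}^{k-1}\left(\frac{\partial}{\partial z^\alpha}\right)^{\vec n^\alpha}P^{an}_{\epsilon<L}(z^\alpha,z^{\alpha+1})$ vanishes identically.
   Context: On $(\mathbb{C}^d)^k$ use coordinates $z^\alpha=(z^\alpha_1,\dots,z^\alpha_d)$ and $d^dz^\alpha=dz^\alpha_1\wedge\cdots\wedge dz^\alpha_d$. Analytic heat kernel: $K^{an}_t(z,w)=(2\pi i t)^{-d}e^{-|z-w|^2/4t}\prod_{i=1}^d(d\bar z_i-d\bar w_i)$ for $t>0$. Analytic propagator: $P^{an}_{\epsilon<L}(z,w)=\int_\epsilon^L dt\,(2\pi i t)^{-d}\sum_{j=1}^d(-1)^{j-1}\frac{\bar z_j-\bar w_j}{4t}e^{-|z-w|^2/4t}\prod_{i\neq j}(d\bar z_i-d\bar w_i)$. Write $\left(\frac{\partial}{\partial z^\alpha}\right)^{\vec n^\alpha}=\prod_{i=1}^d\frac{\partial^{n^\alpha_i}}{\partial (z^\alpha_i)^{n^\alpha_i}}$. The modified analytic weight is the distribution on $\Phi\in\Omega^{0,*}_c((\mathbb{C}^d)^k)$ $$\widetilde W^{k,(\vec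 n)}_{\epsilon<L}(\Phi)=\int_{(\mathbb{C}^d)^k}\prod_{\alpha=1}^k d^dz^\alpha\,\Phi\,\left(\frac{\partial}{\partial z^k}\right)^{\vec n^k}K^{an}_\epsilon(z^1,z^k)\prod_{\alpha=1}^{k-1}\left(\frac{\partial}{\partial z^\alpha}\right)^{\vec n^\alpha}P^{an}_{\epsilon<L}(z^\alpha,z^{\alpha+1}),$$ integrating the top-degree component. *)

From Stdlib Require Import Reals ZArith List Sorted Arith ClassicalEpsilon.
Import ListNotations.
Open Scope R_scope.

Definition C : Type := (R * R)%type.
Definition C0 : C := (0, 0).
Definition C1 : C := (1, 0).
Definition Cadd (z w : C) : C := (fst z + fst w, snd z + snd w).
Definition Copp (z : C) : C := (- fst z, - snd z).
Definition Csub (z w : C) : C := Cadd z (Copp w).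
Definition Cmul (z w : C) : C :=
  (fst z * fst w - snd z * snd w, fst z * snd w + snd z * fst w).
Definition Cconj (z : C) : C := (fst z, - snd z).
Definition Cnorm2 (z : C) : R := fst z * fst z + snd z * snd z.
Definition Cinv (z : C) : C := (fst z / Cnorm2 z, - snd z / Cnorm2 z).
Definition Cscal (r : R) (z : C) : C := (r * fst z, r * snd z).
Fixpoint Cpow (z : C) (m : nat) : C :=
  match m with O => C1 | S m' => Cmul z (Cpow z m') end.
Definition CofZ (x : Z) : C := (IZR x, 0).
Definition Csum (l : list C) : C := fold_right Cadd C0 l.
Definition Rsum (l : list R) : R := fold_right Rplus 0 l.

(* a point of C^d : coordinates i = 0..d-1 (paper: i = 1..d) *)
Definition pt : Type := nat -> C.
(* a configuration in (C^d)^k : Z a i = z^{a+1}_{i+1}, a < k, i < d *)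
Definition config : Type := nat -> nat -> C.

Definition dist2 (d : nat) (z w : pt) : R :=
  Rsum (map (fun i => Cnorm2 (Csub (z i) (w i))) (seq 0 d)).

Definition RInt (f : R -> R) (a b : R) : R :=
  match excluded_middle_informative (inhabited (Riemann_integrable f a b)) with
  | left H => RiemannInt (epsilon H (fun _ => True))
  | right _ => 0
  end.
Definition CInt (f : R -> C) (a b : R) : C :=
  (RInt (fun t => fst (f t)) a b, RInt (fun t => snd (f t)) a b).

Definition RlineInt (f : R -> R) : R :=
  epsilon (inhabits 0) (fun l => forall e, 0 < e -> exists M, forall Rr, Rr > M ->
      Rabs (RInt f (- Rr) Rr - l) < e).

Definition Rderiv (g : R -> R) (x : R) : R :=
  epsilon (inhabits 0) (fun l => derivable_pt_lim g x l).

Definition cupd (Z : config) (a i : nat) (c : C) : config :=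
  fun b l => if andb (Nat.eqb b a) (Nat.eqb l i) then c else Z b l.

Definition Dx (a i : nat) (F : config -> C) (Z : config) : C :=
  let g := fun s => F (cupd Z a i (s, snd (Z a i))) in
  (Rderiv (fun s => fst (g s)) (fst (Z a i)), Rderiv (fun s => snd (g s)) (fst (Z a i))).
Definition Dy (a i : nat) (F : config -> C) (Z : config) : C :=
  let g := fun s => F (cupd Z a i (fst (Z a i), s)) in
  (Rderiv (fun s => fst (g s)) (snd (Z a i)), Rderiv (fun s => snd (g s)) (snd (Z a i))).
Definition Dz (a i : nat) (F : config -> C) : config -> C :=
  fun Z => Cscal (/2) (Cadd (Dx a i F Z) (Cmul (0, -1) (Dy a i F Z))).
(* (d/dz^a)^{nvec} = prod_{i<d} d^{nvec i}/d(z^a_i)^{nvec i} *)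
Definition Dmulti (d a : nat) (nvec : nat -> nat) (F : config -> C) : config -> C :=
  fold_right (fun i G => Nat.iter (nvec i) (Dz a i) G) F (seq 0 d).

(* generator dzbar^a_i has index a*d + i *)
Definition gidx (d a i : nat) : nat := (a * d + i)%nat.
(* constant-coefficient (0,1)-form: integer coefficient of each generator *)
Definition oneform : Type := nat -> Z.
(* dzbar^a_i - dzbar^b_i *)
Definition diff1 (d a b i : nat) : oneform := fun g =>
  ((if Nat.eqb g (gidx d a i) then 1 else 0) - (if Nat.eqb g (gidx d b i) then 1 else 0))%Z.

Fixpoint remove_nth (m : nat) (l : list nat) : list nat :=
  match l, m with
  | [], _ => []
  | _ :: l', O => l'
  | x :: l', S m' => x :: remove_nth m' l'
  end.

(* component of v1 ^ ... ^ vm along dzbar_{S_1} ^ ... ^ dzbar_{S_p}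
   (Laplace expansion of the determinant; 0 unless m = p) *)
Fixpoint ext (vs : list oneform) (S : list nat) : Z :=
  match vs with
  | [] => match S with [] => 1%Z | _ => 0%Z end
  | v :: vs' =>
      fold_right Z.add 0%Z
        (map (fun b => ((-1) ^ Z.of_nat b * v (nth b S O) * ext vs' (remove_nth b S))%Z)
             (seq 0 (length S)))
  end.

(* a (0,q)-form at a point: finite sum of  coefficient * (wedge of 1-forms) *)
Definition pform : Type := list (C * list oneform).
Definition wedge (w1 w2 : pform) : pform :=
  flat_map (fun p => map (fun q => (Cmul (fst p) (fst q), snd p ++ snd q)) w2) w1.
(* coefficient of dzbar_{S_1} ^ ... ^ dzbar_{S_p} *)
Definition form_comp (w : pform) (S : list nat) : C :=
  Csum (map (fun p => Cmul (fst p) (CofZ (ext (snd p) S))) w).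

Definition prefac (d : nat) (t : R) : C := Cinv (Cpow (0, 2 * PI * t) d).

Definition Kcoef (d : nat) (t : R) (z w : pt) : C :=
  Cmul (prefac d t) (exp (- dist2 d z w / (4 * t)), 0).

(* integrand of the j-th scalar coefficient of P^an (j 0-based: sign (-1)^j) *)
Definition Pintegrand (d j : nat) (t : R) (z w : pt) : C :=
  Cmul (prefac d t)
   (Cmul (Cscal ((-1) ^ j / (4 * t)) (Csub (Cconj (z j)) (Cconj (w j))))
         (exp (- dist2 d z w / (4 * t)), 0)).
Definition Pcoef (d : nat) (eps L : R) (j : nat) (z w : pt) : C :=
  CInt (fun t => Pintegrand d j t z w) eps L.

(* (d/dz^k)^{n^k} K^an_eps(z^1, z^k) ; nmat a i = n^{a+1}_{i+1} *)
Definition Kform (d k : nat) (eps : R) (nmat : nat -> nat -> nat) (Z : config) : pform :=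
  [ (Dmulti d (k - 1) (nmat (k - 1)%nat)
        (fun Y => Kcoef d eps (Y O) (Y (k - 1)%nat)) Z,
     map (fun i => diff1 d O (k - 1) i) (seq 0 d)) ].

Definition Pform (d : nat) (eps L : R) (nmat : nat -> nat -> nat) (a : nat) (Z : config)
  : pform :=
  map (fun j =>
     (Dmulti d a (nmat a) (fun Y => Pcoef d eps L j (Y a) (Y (S a))) Z,
      map (fun i => diff1 d a (S a) i) (filter (fun i => negb (Nat.eqb i j)) (seq 0 d))))
   (seq 0 d).

(* the form  (d/dz^k)^{n^k}K ^ prod_{a=1}^{k-1} (d/dz^a)^{n^a} P(z^a,z^{a+1}) *)
Definition Omega (d k : nat) (eps L : R) (nmat : nat -> nat -> nat) (Z : config) : pform :=
  fold_left (fun acc a => wedge acc (Pform d eps L nmat a Z)) (seq 0 (k - 1))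
            (Kform d k eps nmat Z).

Fixpoint sublists (l : list nat) : list (list nat) :=
  match l with
  | [] => [[]]
  | x :: l' => map (cons x) (sublists l') ++ sublists l'
  end.
Definition complement (N : nat) (S : list nat) : list nat :=
  filter (fun g => negb (existsb (Nat.eqb g) S)) (seq 0 N).
(* sign of the shuffle  S ++ complement -> increasing order *)
Definition shuffle_sign (N : nat) (S : list nat) : C :=
  CofZ ((-1) ^ Z.of_nat (length
     (flat_map (fun a => filter (fun b => Nat.ltb b a) (complement N S)) S)))%Z.

(* a (0,q)-form on (C^d)^k: Phi S Z = coefficient of dzbar_S (S increasing) at Z *)
Definition form0 : Type := list nat -> config -> C.

(* top dzbar-coefficient of Phi ^ Omega *)
Definition top_coef (d k : nat) (eps L : R) (nmat : nat -> nat -> nat) (Phi : form0)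
  (Z : config) : C :=
  let N := (k * d)%nat in
  Csum (map (fun S => Cmul (shuffle_sign N S)
                       (Cmul (Phi S Z) (form_comp (Omega d k eps L nmat Z) (complement N S))))
            (sublists (seq 0 N))).

Fixpoint IntAll (F : config -> R) (coords : list (nat * nat * bool)) (Z : config) : R :=
  match coords with
  | [] => F Z
  | (a, i, re) :: cs =>
      RlineInt (fun s => IntAll F cs
        (cupd Z a i (if re then (s, snd (Z a i)) else (fst (Z a i), s))))
  end.
Definition all_coords (d k : nat) : list (nat * nat * bool) :=
  flat_map (fun a => flat_map (fun i => [(a, i, true); (a, i, false)]) (seq 0 d)) (seq 0 k).

Definition Wtilde (d k : nat) (eps L : R) (nmat : nat -> nat -> nat) (Phi : form0) : C :=
  (IntAll (fun Z => fst (top_coef d k eps L nmat Phi Z)) (all_coords d k) (fun _ _ => C0),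
   IntAll (fun Z => snd (top_coef d k eps L nmat Phi Z)) (all_coords d k) (fun _ _ => C0)).

Definition compact_support (d k : nat) (Phi : form0) : Prop :=
  exists Rb : R, forall S Z, Phi S Z <> C0 ->
    forall a i, (a < k)%nat -> (i < d)%nat ->
      Rabs (fst (Z a i)) <= Rb /\ Rabs (snd (Z a i)) <= Rb.

(* Every summand of the form carries, from the heat kernel, the d one-forms
   dzbar^1_i - dzbar^k_i (i < d), and from the a-th propagator the d - 1 forms
   dzbar^a_i - dzbar^(a+1)_i with one index j_a omitted.  There are only
   k - 1 < d propagators, so some index i is omitted by none of them; then
   dzbar^1_i - dzbar^k_i is the telescoping sum of the forms
   dzbar^a_i - dzbar^(a+1)_i, all present in the same wedge product, which
   therefore vanishes by multilinearity and alternation.  The weight is then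
   the integral of the zero function. *)

From Pilot Require Import Defs.
From Stdlib Require Import Reals ZArith List Sorted Arith.
From Stdlib Require Import Lia Lra FunctionalExtensionality ClassicalEpsilon.
Open Scope R_scope.

Definition sumZ (f : nat -> Z) (l : list nat) : Z := fold_right Z.add 0%Z (map f l).

Definition sgn (n : nat) : Z := ((-1) ^ Z.of_nat n)%Z.

Lemma sgn_S (n : nat) : sgn (S n) = (- sgn n)%Z.
Proof. unfold sgn. rewrite Nat2Z.inj_succ, Z.pow_succ_r by lia. ring. Qed.

Section SumZ.
Variables (f g : nat -> Z).

Lemma sumZ_ext (l : list nat) : (forall b, In b l -> f b = g b) -> sumZ f l = sumZ g l.
Proof.
  unfold sumZ; induction l as [|x l IH]; intros H; simpl; auto.
  rewrite H, IH; auto with datatypes.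
Qed.

Lemma sumZ_lin (x y : Z) (l : list nat) :
  sumZ (fun b => x * f b + y * g b)%Z l = (x * sumZ f l + y * sumZ g l)%Z.
Proof. unfold sumZ; induction l; simpl; [ring|]. rewrite IHl. ring. Qed.

Lemma sumZ_app (l1 l2 : list nat) : sumZ f (l1 ++ l2) = (sumZ f l1 + sumZ f l2)%Z.
Proof. unfold sumZ; induction l1; simpl; [ring|]. rewrite IHl1. ring. Qed.

Lemma sumZ_seq_S (a m : nat) : sumZ f (seq a (S m)) = (sumZ f (seq a m) + f (a + m)%nat)%Z.
Proof. rewrite seq_S, sumZ_app. unfold sumZ at 2. simpl. ring. Qed.

End SumZ.

Lemma sumZ_scal (c : Z) (f : nat -> Z) (l : list nat) :
  sumZ (fun b => c * f b)%Z l = (c * sumZ f l)%Z.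
Proof.
  rewrite (sumZ_ext _ (fun b => c * f b + 0 * f b)%Z) by (intros; ring).
  rewrite sumZ_lin. ring.
Qed.

Lemma sumZ_sub (f g : nat -> Z) (l : list nat) :
  sumZ (fun b => f b - g b)%Z l = (sumZ f l - sumZ g l)%Z.
Proof.
  rewrite (sumZ_ext _ (fun b => 1 * f b + (-1) * g b)%Z) by (intros; ring).
  rewrite sumZ_lin. ring.
Qed.

Lemma sumZ_triangle (n : nat) (g : nat -> nat -> Z) :
  sumZ (fun b => sumZ (fun c => g b c) (seq 0 b)) (seq 0 n) =
  sumZ (fun c => sumZ (fun b => g (S b) c) (seq c (n - 1 - c))) (seq 0 n).
Proof.
  induction n as [|n IH]; [reflexivity|].
  rewrite !sumZ_seq_S. simpl (0 + n)%nat. rewrite IH.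
  replace (S n - 1 - n)%nat with O by lia.
  change (sumZ (fun b => g (S b) n) (seq n 0)) with 0%Z.
  rewrite (sumZ_ext (fun c => sumZ (fun b => g (S b) c) (seq c (S n - 1 - c)))
     (fun c => 1 * sumZ (fun b => g (S b) c) (seq c (n - 1 - c)) + 1 * g n c)%Z).
  - rewrite (sumZ_lin (fun c => sumZ (fun b => g (S b) c) (seq c (n - 1 - c))) (fun c => g n c)). ring.
  - intros c Hc. apply in_seq in Hc.
    replace (S n - 1 - c)%nat with (S (n - 1 - c)) by lia.
    rewrite sumZ_seq_S. replace (S (c + (n - 1 - c)))%nat with n by lia. ring.
Qed.

Lemma nth_remove_nth_lt (l : list nat) (b c : nat) :
  (c < b)%nat -> nth c (remove_nth b l) O = nth c l O.
Proof.
  revert b c; induction l as [|x l IH]; intros [|b] c H; simpl; try lia; auto.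
  destruct c; auto. apply IH; lia.
Qed.

Lemma nth_remove_nth_ge (l : list nat) (b c : nat) :
  (b <= c)%nat -> nth c (remove_nth b l) O = nth (S c) l O.
Proof.
  revert b c; induction l as [|x l IH]; intros [|b] [|c] H; simpl; auto; try lia.
  apply IH; lia.
Qed.

Lemma remove_nth_remove_nth (l : list nat) (b c : nat) : (b <= c)%nat ->
  remove_nth c (remove_nth b l) = remove_nth b (remove_nth (S c) l).
Proof.
  revert b c; induction l as [|x l IH]; intros [|b] [|c] H; simpl; auto; try lia.
  f_equal. apply IH; lia.
Qed.

Lemma length_remove_nth (l : list nat) (b : nat) :
  (b < length l)%nat -> length (remove_nth b l) = (length l - 1)%nat.
Proof.
  revert b; induction l as [|x l IH]; intros [|b] H; simpl in *; try lia.
  rewrite IH by lia. lia.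
Qed.

Lemma ext_cons (v : oneform) (vs : list oneform) (S : list nat) :
  ext (v :: vs) S =
  sumZ (fun b => sgn b * v (nth b S O) * ext vs (remove_nth b S))%Z (seq 0 (length S)).
Proof. reflexivity. Qed.

(* Expanding [ext] twice gives a double Laplace sum over pairs b <> c of rows;
   its parts with c < b and c > b are exchanged by swapping [u] and [v]. *)
Lemma ext_swap (u v : oneform) (vs : list oneform) (l : list nat) :
  ext (u :: v :: vs) l = (- ext (v :: u :: vs) l)%Z.
Proof.
  set (G := fun (x y : oneform) (b c : nat) =>
    (sgn b * sgn c * x (nth b l O) * y (nth c l O)
     * ext vs (remove_nth c (remove_nth b l)))%Z).
  set (X := fun x y => sumZ (fun b => sumZ (fun c => G x y b c) (seq 0 b)) (seq 0 (length l))).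
  assert (Hsplit : forall x y, ext (x :: y :: vs) l = (X x y - X y x)%Z).
  { intros x y. unfold X. rewrite (sumZ_triangle (length l) (G y x)), <- sumZ_sub, ext_cons.
    apply sumZ_ext. intros b Hb. apply in_seq in Hb.
    rewrite ext_cons, length_remove_nth, <- sumZ_scal by lia.
    replace (length l - 1)%nat with (b + (length l - 1 - b))%nat at 1 by lia.
    rewrite seq_app, sumZ_app. simpl (0 + b)%nat.
    rewrite (sumZ_ext _ (fun c => G x y b c) (seq 0 b)).
    2:{ intros c Hc; apply in_seq in Hc.
        rewrite nth_remove_nth_lt by lia. unfold G. ring. }
    rewrite (sumZ_ext _ (fun c => -1 * G y x (S c) b)%Z (seq b (length l - 1 - b))).
    2:{ intros c Hc; apply in_seq in Hc.
        rewrite nth_remove_nth_ge, remove_nth_remove_nth by lia. unfold G.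
        rewrite sgn_S. ring. }
    rewrite sumZ_scal. ring. }
  rewrite !Hsplit. ring.
Qed.

Lemma ext_add_head (x y : Z) (v1 v2 : oneform) (vs : list oneform) (l : list nat) :
  ext ((fun g => x * v1 g + y * v2 g)%Z :: vs) l = (x * ext (v1 :: vs) l + y * ext (v2 :: vs) l)%Z.
Proof. rewrite !ext_cons, <- sumZ_lin. apply sumZ_ext. intros; ring. Qed.

Lemma ext_app_l_linear (pre A B C : list oneform) (a b : Z) :
  (forall l, ext A l = a * ext B l + b * ext C l)%Z ->
  forall l, ext (pre ++ A) l = (a * ext (pre ++ B) l + b * ext (pre ++ C) l)%Z.
Proof.
  induction pre as [|w pre IH]; intros H l; [exact (H l)|]. simpl app.
  rewrite !ext_cons, <- sumZ_lin. apply sumZ_ext. intros c _. rewrite IH by auto. ring.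
Qed.

Section Alternating.
Variables (pre post : list oneform) (l : list nat).

Lemma ext_swap_mid (u v : oneform) :
  ext (pre ++ u :: v :: post) l = (- ext (pre ++ v :: u :: post) l)%Z.
Proof.
  rewrite (ext_app_l_linear pre (u :: v :: post) (v :: u :: post) (v :: u :: post) (-1) 0).
  - ring.
  - intros; rewrite ext_swap; ring.
Qed.

Lemma ext_add_mid (v1 v2 : oneform) :
  ext (pre ++ (fun g => v1 g + v2 g)%Z :: post) l =
  (ext (pre ++ v1 :: post) l + ext (pre ++ v2 :: post) l)%Z.
Proof.
  rewrite (ext_app_l_linear pre _ (v1 :: post) (v2 :: post) 1 1).
  - ring.
  - intros l'. rewrite <- ext_add_head. do 2 f_equal.
    apply functional_extensionality; intros; ring.
Qed.

Lemma ext_zero_mid : ext (pre ++ (fun _ => 0%Z) :: post) l = 0%Z.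
Proof.
  rewrite (ext_app_l_linear pre _ post post 0 0).
  - ring.
  - intros l'. rewrite ext_cons, (sumZ_ext _ (fun b => 0 * sgn b)%Z), sumZ_scal by (intros; ring).
    ring.
Qed.

End Alternating.

Lemma ext_repeat (mid pre post : list oneform) (u : oneform) (l : list nat) :
  ext (pre ++ u :: mid ++ u :: post) l = 0%Z.
Proof.
  revert pre; induction mid as [|m mid IH]; intros pre; simpl.
  - pose proof (ext_swap_mid pre post l u u). lia.
  - rewrite ext_swap_mid.
    replace (pre ++ m :: u :: mid ++ u :: post)
      with ((pre ++ m :: nil) ++ u :: mid ++ u :: post) by (rewrite <- app_assoc; reflexivity).
    rewrite IH. ring.
Qed.

(* [diff1 d a (a + m) i] is the telescoping sum of the [diff1 d a' (S a') i]. *)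
Lemma ext_telescope (d i m a : nat) (pre post : list oneform) (l : list nat) :
  (forall a', (a <= a' < a + m)%nat -> In (diff1 d a' (S a') i) post) ->
  ext (pre ++ diff1 d a (a + m) i :: post) l = 0%Z.
Proof.
  revert a; induction m as [|m IH]; intros a H.
  - replace (diff1 d a (a + 0) i) with (fun _ : nat => 0%Z); [apply ext_zero_mid|].
    apply functional_extensionality; intros g. unfold diff1. rewrite Nat.add_0_r. lia.
  - replace (diff1 d a (a + S m) i)
      with (fun g => diff1 d a (S a) i g + diff1 d (S a) (S a + m) i g)%Z.
    + rewrite ext_add_mid, IH by (intros; apply H; lia).
      destruct (in_split _ _ (H a ltac:(lia))) as [p1 [p2 ->]].
      rewrite ext_repeat. ring.
    + apply functional_extensionality; intros g. unfold diff1.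
      replace (S a + m)%nat with (a + S m)%nat by lia. lia.
Qed.

(* After wedging the propagators indexed by [done], each summand is [Kl ++ rest]
   where [J] records the indices j_a omitted by those propagators. *)
Definition propagator_shape (d : nat) (Kl : list oneform) (done : list nat) (w : pform) : Prop :=
  forall p, In p w -> exists rest J, snd p = Kl ++ rest /\ length J = length done /\
    forall i, (i < d)%nat -> ~ In i J -> forall a, In a done -> In (diff1 d a (S a) i) rest.

Lemma propagator_shape_wedge d eps L nmat Z Kl done a acc :
  propagator_shape d Kl done acc ->
  propagator_shape d Kl (done ++ a :: nil) (wedge acc (Pform d eps L nmat a Z)).
Proof.
  intros H p Hp. unfold wedge, Pform in Hp.
  apply in_flat_map in Hp as [p1 [Hp1 Hp]]. apply in_map_iff in Hp as [q [<- Hq]].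
  apply in_map_iff in Hq as [j [<- Hj]].
  destruct (H p1 Hp1) as [rest [J [E1 [E2 E3]]]].
  exists (rest ++ map (fun i => diff1 d a (S a) i) (filter (fun i => negb (Nat.eqb i j)) (seq 0 d))),
         (J ++ j :: nil).
  simpl. rewrite E1, app_assoc, !length_app. split; [auto|]. split; [simpl; lia|].
  intros i Hi HJ a' Ha'. apply in_or_app. apply in_app_or in Ha' as [Ha'|[<-|[]]].
  - left. apply E3; auto. intro; apply HJ, in_or_app; auto.
  - right. apply in_map, filter_In. split; [apply in_seq; lia|].
    destruct (Nat.eqb_spec i j) as [->|]; auto.
    exfalso; apply HJ, in_or_app; right; left; auto.
Qed.

Lemma propagator_shape_fold d eps L nmat Z Kl ls : forall done acc,
  propagator_shape d Kl done acc ->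
  propagator_shape d Kl (done ++ ls)
    (fold_left (fun acc a => wedge acc (Pform d eps L nmat a Z)) ls acc).
Proof.
  induction ls as [|a ls IH]; intros done acc H; simpl.
  - rewrite app_nil_r; auto.
  - replace (done ++ a :: ls) with ((done ++ a :: nil) ++ ls) by (rewrite <- app_assoc; auto).
    apply IH, propagator_shape_wedge; auto.
Qed.

Lemma propagator_shape_Omega d k eps L nmat Z :
  propagator_shape d (map (fun i => diff1 d O (k - 1) i) (seq 0 d)) (seq 0 (k - 1))
    (Omega d k eps L nmat Z).
Proof.
  apply (propagator_shape_fold _ _ _ _ _ _ _ nil). intros q [<-|[]].
  exists nil, nil. simpl. rewrite app_nil_r. repeat split; auto.
Qed.

Lemma exists_lt_notin (d : nat) (J : list nat) :
  (length J < d)%nat -> exists i, (i < d)%nat /\ ~ In i J.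
Proof.
  intros H. apply NNPP. intros E.
  assert (Hincl : incl (seq 0 d) J).
  { intros i Hi. apply in_seq in Hi. apply NNPP. intros Hn. apply E. exists i; split; [lia|auto]. }
  pose proof (NoDup_incl_length (seq_NoDup d 0) Hincl). rewrite length_seq in *. lia.
Qed.

Lemma ext_Omega_eq0 d k eps L nmat Z p S : (1 <= k)%nat -> (k <= d)%nat ->
  In p (Omega d k eps L nmat Z) -> ext (snd p) S = 0%Z.
Proof.
  intros Hk Hkd Hp.
  destruct (propagator_shape_Omega d k eps L nmat Z p Hp) as [rest [J [E1 [E2 E3]]]].
  rewrite length_seq in E2.
  destruct (exists_lt_notin d J ltac:(lia)) as [i [Hi HJ]].
  assert (Hin : In (diff1 d O (k - 1) i) (map (fun i => diff1 d O (k - 1) i) (seq 0 d)))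
    by (apply in_map, in_seq; lia).
  destruct (in_split _ _ Hin) as [p1 [p2 Ep]].
  rewrite E1, Ep, <- app_assoc. simpl.
  apply (ext_telescope d i (k - 1) O p1 (p2 ++ rest)).
  intros a' Ha'. apply in_or_app; right. apply E3; auto. apply in_seq; lia.
Qed.

Lemma Cmul_C0_r (c : Defs.C) : Cmul c C0 = C0.
Proof. unfold Cmul, C0; simpl. f_equal; ring. Qed.

Lemma Csum_map_C0 {A : Type} (f : A -> Defs.C) (ls : list A) :
  (forall x, In x ls -> f x = C0) -> Csum (map f ls) = C0.
Proof.
  induction ls as [|x ls IH]; intros H; simpl; auto.
  rewrite H, IH by auto with datatypes. unfold Cadd, C0; simpl. f_equal; ring.
Qed.

Lemma form_comp_Omega_eq0 d k eps L nmat Z S : (1 <= k)%nat -> (k <= d)%nat ->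
  form_comp (Omega d k eps L nmat Z) S = C0.
Proof.
  intros Hk Hkd. apply Csum_map_C0. intros p Hp.
  rewrite (ext_Omega_eq0 d k eps L nmat Z p S Hk Hkd Hp). apply Cmul_C0_r.
Qed.

Lemma RInt_0 (a b : R) : RInt (fun _ => 0) a b = 0.
Proof.
  unfold RInt. destruct excluded_middle_informative as [H|H]; auto.
  pose proof (@RiemannInt_P15 a b 0 (epsilon H (fun _ => True))) as E.
  unfold fct_cte in E. simpl in E. rewrite E. ring.
Qed.

Lemma RlineInt_0 : RlineInt (fun _ => 0) = 0.
Proof.
  unfold RlineInt.
  set (P := fun l : R => forall e, 0 < e -> exists M, forall Rr, Rr > M ->
      Rabs (RInt (fun _ => 0) (- Rr) Rr - l) < e).
  assert (HP : P (epsilon (inhabits 0) P)).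
  { apply epsilon_spec. exists 0. intros e He. exists 0. intros Rr _.
    rewrite RInt_0, Rminus_0_r, Rabs_R0. auto. }
  set (l := epsilon (inhabits 0) P) in *.
  destruct (Req_dec l 0) as [E|E]; auto. exfalso.
  destruct (HP (Rabs l) (Rabs_pos_lt _ E)) as [M HM].
  assert (HM' : Rabs M + 1 > M) by (pose proof (Rle_abs M); lra).
  specialize (HM _ HM'). rewrite RInt_0, Rminus_0_l, Rabs_Ropp in HM. lra.
Qed.

Lemma IntAll_0 (F : config -> R) (cs : list (nat * nat * bool)) (Z : config) :
  (forall Y, F Y = 0) -> IntAll F cs Z = 0.
Proof.
  intros HF. revert Z. induction cs as [|[[a i] re] cs IH]; intros Z; simpl; auto.
  rewrite <- RlineInt_0. f_equal. apply functional_extensionality; intros s. apply IH.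
Qed.

(* The form vanishes pointwise for all [eps], [L]. *)
Theorem mainTheorem5 (d k : nat) (nmat : nat -> nat -> nat) (eps L : R) :
  (1 <= d)%nat -> (1 <= k)%nat -> (k <= d)%nat -> 0 < eps -> eps < L ->
  (forall Phi : form0, compact_support d k Phi -> Wtilde d k eps L nmat Phi = C0)
  /\
  (forall (Z : config) (S : list nat),
      Sorted lt S -> (forall g, In g S -> (g < k * d)%nat) ->
      form_comp (Omega d k eps L nmat Z) S = C0).
Proof.
  intros _ Hk Hkd _ _. split.
  - intros Phi _.
    assert (Htop : forall Z, top_coef d k eps L nmat Phi Z = C0).
    { intros Z. apply Csum_map_C0. intros S _.
      rewrite form_comp_Omega_eq0, !Cmul_C0_r by auto. reflexivity. }
    unfold Wtilde.
    rewrite !(IntAll_0 _ _ _ (fun Z => f_equal fst (Htop Z))),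
            !(IntAll_0 _ _ _ (fun Z => f_equal snd (Htop Z))).
    reflexivity.
  - intros Z S _ _. apply form_comp_Omega_eq0; auto.
Qed.
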